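(* Let $A$ be a balanced parenthesis sequence inducing the ordered matching $M$. Then $(A)$ is a balanced parenthesis sequence; let $M'$ be the matching it induces and let $|M'|$ denote the number of vertices of $M'$. Then $$r_<(M',K_3)\le r_<(M,K_3)+|M'|+1.$$
   Context: An ordered graph on $[N]$ is a graph with vertex set $\{1,\dots,N\}$ equipped with the natural order. Given a red/blue coloring of the edges of the complete graph on $[N]$, a red (ordered) copy of an ordered graph $G$ on $[p]$ is a strictly increasing map $\varphi:[p]\to[N]$ such that $\varphi(u)\varphi(v)$ is red for every edge $uv$ of $G$. The ordered Ramsey number $r_<(G,K_3)$ is the smallest $N$ such that every red/blue coloring of the edges of the complete graph on $[N]$ contains either a red ordered copy of $G$ or a blue triangle. A balanced parenthesis sequence of length $2m$ is a correctly matched string of $m$ open and $m$ close parentheses (possibly empty); it induces the ordered matching on $[2m]$ whose edges are the pairs $\{i,j\}$ such that the parenthesis at position $i$ is an open parenthesis matched with the close parenthesis at position $j$. *)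

From mathcomp Require Import all_boot.
Set Implicit Arguments.
Unset Strict Implicit.
Unset Printing Implicit Defensive.

(* A parenthesis sequence: true = '(' (open), false = ')' (close). *)

Definition balanced (s : seq bool) : bool :=
  [forall k : 'I_(size s).+1,
      count (fun b => ~~ b) (take k s) <= count id (take k s)]
  && (count id s == count (fun b => ~~ b) s).

Definition paren_wrap (s : seq bool) : seq bool := true :: rcons s false.

Definition matched (s : seq bool) (i j : nat) : bool :=
  [&& i < j, j < size s, nth false s i, ~~ nth false s j &
      balanced (take (j - i.+1) (drop i.+1 s))].

Definition matching_graph (s : seq bool) : rel 'I_(size s) :=
  fun u v => matched s u v || matched s v u.

Arguments matching_graph s : clear implicits.

(* An edge colouring of the complete graph on [N]: col x y for x < y is
   true for red, false for blue (values on other pairs are irrelevant). *)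
Definition red_copy (p : nat) (G : rel 'I_p) (N : nat)
    (col : 'I_N -> 'I_N -> bool) : Prop :=
  exists phi : 'I_p -> 'I_N,
    (forall u v : 'I_p, u < v -> phi u < phi v) /\
    (forall u v : 'I_p, u < v -> G u v -> col (phi u) (phi v)).

Definition blue_triangle (N : nat) (col : 'I_N -> 'I_N -> bool) : Prop :=
  exists a b c : 'I_N,
    [/\ a < b, b < c, ~~ col a b, ~~ col b c & ~~ col a c].

Definition arrows (p : nat) (G : rel 'I_p) (N : nat) : Prop :=
  forall col : 'I_N -> 'I_N -> bool, red_copy G col \/ blue_triangle col.

Definition is_ordered_ramsey_K3 (p : nat) (G : rel 'I_p) (N : nat) : Prop :=
  arrows G N /\ forall N', arrows G N' -> N <= N'.

(* Let w be the last of the N + |M'| + 1 vertices.  If w has |M'| blue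
   neighbours, either two of them are joined by a blue edge, which closes a
   blue triangle with w, or they span a red clique containing every ordered
   graph on |M'| vertices.  Otherwise w has N + 1 red neighbours: the first
   one becomes the outer open parenthesis of (A), and on the last N ones
   r_<(M, K_3) <= N yields either a blue triangle or a red copy of M.  Mapping
   the outer close parenthesis to w gives a red copy of M', because the outer
   open parenthesis is matched with nothing inside A. *)

From mathcomp Require Import all_boot zify.
From Stdlib Require Import Classical.
From Stdlib Require Wf_nat.

Set Implicit Arguments.
Unset Strict Implicit.

Lemma enum_val_ord_increasing m (A : {pred 'I_m}) :
  {homo @enum_val _ A : i j / i < j}.
Proof.
move=> i j ij.
have sortedA : sorted ltn (map val (enum A)).
  rewrite -[enum _](eq_filter (mem_enum _)) -(eq_filter (mem_map val_inj _)).
  rewrite -filter_map (sorted_filter ltn_trans) //.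
  by rewrite unlock val_ord_enum iota_ltn_sorted.
have sizeA : size (map val (enum A)) = #|A| by rewrite size_map cardE.
have := sorted_ltn_nth ltn_trans 0 sortedA i j.
rewrite !inE sizeA !ltn_ord !(nth_map (enum_default i)) -?cardE //.
rewrite /enum_val (set_nth_default (enum_default i) (enum_default j)) -?cardE //.
by apply.
Qed.

Lemma increasing_into_ord m (A : {pred 'I_m}) k : k <= #|A| ->
  exists f : 'I_k -> 'I_m, {homo f : i j / i < j} /\ forall i, f i \in A.
Proof.
move=> le_kA; exists (fun i => enum_val (widen_ord le_kA i)); split.
  by move=> i j ij; apply: enum_val_ord_increasing.
by move=> i; apply: enum_valP.
Qed.

Section Colourings.

Variables (N : nat) (col : 'I_N -> 'I_N -> bool).

Lemma red_copy_of_red_clique p (G : rel 'I_p) (f : 'I_p -> 'I_N) :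
  {homo f : i j / i < j} -> (forall i j : 'I_p, i < j -> col (f i) (f j)) ->
  red_copy G col.
Proof. by move=> f_incr f_red; exists f; split=> // u v uv _; apply: f_red. Qed.

Lemma red_copy_or_blue_triangle_below p (G : rel 'I_p) (f : 'I_p -> 'I_N)
    (w : 'I_N) :
  {homo f : i j / i < j} -> (forall i, f i < w /\ ~~ col (f i) w) ->
  red_copy G col \/ blue_triangle col.
Proof.
move=> f_incr f_blue.
case: (boolP [exists i : 'I_p, exists j : 'I_p, (i < j) && ~~ col (f i) (f j)]).
  move=> /existsP[i /existsP[j /andP[ij blue_ij]]]; right.
  have [_ blue_iw] := f_blue i; have [fjw blue_jw] := f_blue j.
  exists (f i), (f j), w; split=> //; exact: f_incr.
move=> /existsPn all_red; left.
apply: (red_copy_of_red_clique _ f_incr) => i j ij.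
by have /existsPn/(_ j) := all_red i; rewrite ij negbK.
Qed.

Lemma arrows_restrict p (G : rel 'I_p) M (h : 'I_M -> 'I_N) :
  arrows G M -> {homo h : i j / i < j} ->
  red_copy G (fun i j => col (h i) (h j)) \/ blue_triangle col.
Proof.
move=> arrG h_incr.
case: (arrG (fun i j => col (h i) (h j))) => [|[a [b [c]]]]; first by left.
by case=> ab bc *; right; exists (h a), (h b), (h c); split; rewrite ?h_incr.
Qed.

End Colourings.

Variant ends_spec p : 'I_p.+2 -> Type :=
  | EndsFirst : ends_spec ord0
  | EndsInner (i : 'I_p) : ends_spec (lift ord0 (lift ord_max i))
  | EndsLast : ends_spec ord_max.

Lemma lift0_max n : lift ord0 (@ord_max n) = ord_max.
Proof. exact: val_inj. Qed.

Lemma endsP p (u : 'I_p.+2) : ends_spec u.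
Proof.
case: (unliftP ord0 u) => [u1 ->|->]; last exact: EndsFirst.
case: (unliftP ord_max u1) => [i ->|->]; first exact: EndsInner.
by rewrite lift0_max; apply: EndsLast.
Qed.

Section AddEnds.

(* The size q of G' is only propositionally p.+2 (as for size (paren_wrap A)),
   so vertices of G' are related to those of G through their values. *)
Variables (p q : nat) (G : rel 'I_p) (G' : rel 'I_q).
Hypothesis q_eq : q = p.+2.
Hypothesis G'_first : forall u v : 'I_q, u = 0 :> nat -> v.+1 < q -> ~~ G' u v.
Hypothesis G'_inner : forall (u v : 'I_p) (u' v' : 'I_q),
  u' = u.+1 :> nat -> v' = v.+1 :> nat -> G' u' v' -> G u v.

Lemma red_copy_add_ends N (col : 'I_N -> 'I_N -> bool) (a w : 'I_N)
    (phi : 'I_p -> 'I_N) :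
  {homo phi : i j / i < j} ->
  (forall i j : 'I_p, i < j -> G i j -> col (phi i) (phi j)) ->
  (forall i, a < phi i < w) -> a < w -> col a w -> (forall i, col (phi i) w) ->
  red_copy G' col.
Proof.
move=> phi_incr phi_red phi_mid aw red_aw red_phiw; subst q.
pose ext (u : 'I_p.+2) :=
  if unlift ord0 u is Some u1 then
    if unlift ord_max u1 is Some i then phi i else w
  else a.
have ext_first : ext ord0 = a by rewrite /ext unlift_none.
have ext_inner i : ext (lift ord0 (lift ord_max i)) = phi i.
  by rewrite /ext !liftK.
have ext_last : ext ord_max = w by rewrite -lift0_max /ext liftK unlift_none.
have inner_val (i : 'I_p) : @lift p.+2 ord0 (lift ord_max i) = i.+1 :> nat.
  by rewrite lift0 lift_max.
exists ext; split.
  move=> u v; case: (endsP u) => [|i|]; case: (endsP v) => [|j|];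
    rewrite ?ext_first ?ext_inner ?ext_last ?inner_val //= ?ltnS.
  - by case/andP: (phi_mid j).
  - exact: phi_incr.
  - by case/andP: (phi_mid i).
  - by rewrite ltnNge ltnW.
  - by rewrite ltnn.
move=> u v; case: (endsP u) => [|i|]; case: (endsP v) => [|j|];
  rewrite ?ext_first ?ext_inner ?ext_last ?inner_val //= ?ltnS.
- move=> _; apply: contraTT => _.
  by apply: G'_first; rewrite // inner_val !ltnS.
- by move=> ij /(G'_inner (inner_val i) (inner_val j)); apply: phi_red.
- by rewrite ltnNge ltnW.
- by rewrite ltnn.
Qed.

Lemma arrows_add_ends N : arrows G N -> arrows G' (N + q).+1.
Proof.
move=> arrG col; pose w := @ord_max (N + q).
have below_w (x : 'I_(N + q).+1) : x != w -> x < w.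
  by rewrite -val_eqE ltn_neqAle -ltnS ltn_ord andbT.
pose R := [set~ w] :&: [set x | col x w].
pose B := [set~ w] :\: [set x | col x w].
have card_RB : #|R| + #|B| = N + q by rewrite cardsID cardsC1 card_ord.
have [le_qB|lt_Bq] := leqP q #|B|.
  have [f [f_incr f_B]] := increasing_into_ord le_qB.
  apply: (red_copy_or_blue_triangle_below (w := w) _ f_incr) => i.
  by move: (f_B i); rewrite !inE => /andP[blue /below_w].
have le_NR : N.+1 <= #|R| by rewrite -(leq_add2r #|B|) card_RB addSn ltn_add2l.
have [g [g_incr g_R]] := increasing_into_ord le_NR.
have g_red i : g i < w /\ col (g i) w.
  by move: (g_R i); rewrite !inE => /andP[/below_w].
pose h i := g (lift ord0 i).
have h_incr : {homo h : i j / i < j}.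
  by move=> i j ij; apply: g_incr; rewrite !lift0.
have [[psi [psi_incr psi_red]]|] := arrows_restrict col arrG h_incr;
  last by right.
left; apply: (@red_copy_add_ends _ col (g ord0) w (h \o psi))
  => [i j ij | i j ij | i | | | i].
- exact/h_incr/psi_incr.
- exact: psi_red.
- by rewrite (g_red _).1 andbT g_incr // lift0.
- exact: (g_red _).1.
- exact: (g_red _).2.
- exact: (g_red _).2.
Qed.

End AddEnds.

Lemma ex_ordered_ramsey_K3 p (G : rel 'I_p) n :
  arrows G n -> exists N, is_ordered_ramsey_K3 G N /\ N <= n.
Proof.
move=> arrG.
have [N [[arrN minN] _]] := Wf_nat.dec_inh_nat_subset_has_unique_least_element
  (arrows G) (fun m => classic _) (ex_intro _ n arrG).
by exists N; split; [split=> // m /minN/leP | apply/leP/minN].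
Qed.

Lemma size_paren_wrap A : size (paren_wrap A) = (size A).+2.
Proof. by rewrite /= size_rcons. Qed.

Lemma balanced_paren_wrap A : balanced A -> balanced (paren_wrap A).
Proof.
move=> /andP[/forallP prefixA /eqP countA]; apply/andP; split; last first.
  by rewrite /= -cats1 !count_cat /=; lia.
apply/forallP => -[[|k] // lt_k] /=; rewrite /= size_rcons ltnS in lt_k.
have [lt_kA|] := leqP k (size A).
  rewrite -cats1 takel_cat //.
  by have := prefixA (Ordinal (lt_kA : k < (size A).+1)) => /=; lia.
move=> lt_Ak; have -> : k = size (rcons A false) by rewrite size_rcons; lia.
by rewrite take_size -cats1 !count_cat /=; lia.
Qed.

Lemma matched_paren_wrap A u v : u < size A -> v < size A ->
  matched (paren_wrap A) u.+1 v.+1 = matched A u v.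
Proof.
move=> lt_uA lt_vA.
rewrite /matched /paren_wrap /= size_rcons !ltnS (ltnW lt_vA) lt_vA.
rewrite !nth_rcons lt_uA lt_vA subSS (drop_rcons lt_uA) -cats1.
by case: (ltnP u v) => //= uv; rewrite takel_cat // size_drop; lia.
Qed.

Lemma matched_paren_wrap_first A v : balanced A -> v <= size A ->
  ~~ matched (paren_wrap A) 0 v.
Proof.
move=> /andP[/forallP prefixA _]; case: v => // v lt_vA.
apply/negP; rewrite /matched /paren_wrap /= size_rcons nth_rcons lt_vA.
rewrite subn1 /= drop0.
move=> /and3P[_ close_v /andP[_ /eqP balanced_v]].
rewrite -cats1 takel_cat in balanced_v; last exact: ltnW.
have := prefixA (Ordinal (lt_vA : v.+1 < (size A).+1)).
rewrite /= (take_nth false lt_vA) -cats1 !count_cat /=.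
by move: close_v; case: (nth false A v) => //= _; lia.
Qed.

Lemma matching_graph_paren_wrap_first A : balanced A ->
  forall u v : 'I_(size (paren_wrap A)), u = 0 :> nat ->
    v.+1 < size (paren_wrap A) -> ~~ matching_graph (paren_wrap A) u v.
Proof.
move=> bA u v u0 lt_v; rewrite /matching_graph u0 negb_or.
by rewrite matched_paren_wrap_first //= -2!ltnS -size_paren_wrap.
Qed.

Lemma matching_graph_paren_wrap A (u v : 'I_(size A))
    (u' v' : 'I_(size (paren_wrap A))) :
  u' = u.+1 :> nat -> v' = v.+1 :> nat ->
  matching_graph (paren_wrap A) u' v' -> matching_graph A u v.
Proof.
by move=> u'E v'E; rewrite /matching_graph u'E v'E !matched_paren_wrap.
Qed.

Theorem lemma2p5 (A : seq bool) :
  balanced A ->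
  balanced (paren_wrap A) /\
  forall N : nat,
    is_ordered_ramsey_K3 (matching_graph A) N ->
    exists N' : nat,
      is_ordered_ramsey_K3 (matching_graph (paren_wrap A)) N' /\
      N' <= N + size (paren_wrap A) + 1.
Proof.
move=> bA; split; first exact: balanced_paren_wrap.
move=> N [arrN _]; rewrite addn1; apply: ex_ordered_ramsey_K3.
exact: (arrows_add_ends (size_paren_wrap A) (matching_graph_paren_wrap_first bA)
                        (@matching_graph_paren_wrap A) arrN).
Qed.
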